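(* Let $f:I\to\mathbb{R}$ and $g:J\to\mathbb{R}$ be smooth functions on open intervals $I,J\subset\mathbb{R}$, and let $S$ be the translation surface $z=f(x)+g(y)$, $(x,y)\in I\times J$. Let $\phi(x,y,z)=\alpha x+\beta y+\gamma z$ with $\alpha,\beta,\gamma\in\mathbb{R}$ not all zero. If $S$ is $\phi$-minimal, then $f$ or $g$ is an affine function (i.e. $f''\equiv0$ or $g''\equiv0$); consequently $S$ is a cylindrical surface whose rulings are parallel to the $xz$-plane or to the $yz$-plane.
   Context: For a smooth oriented surface with unit normal $N$, $H$ is the mean curvature normalized so that $\Delta_S X=2HN$. The $\phi$-mean curvature is $H_\phi=H-\tfrac12\langle N,(\alpha,\beta,\gamma)\rangle$ and $S$ is $\phi$-minimal if $H_\phi\equiv0$. For the graph $z=f(x)+g(y)$ this condition is equivalent to $(1+g'^2)f''+(1+f'^2)g''=(1+f'^2+g'^2)(-\alpha f'-\beta g'+\gamma)$. *)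

From Stdlib Require Import Reals Lra.
Open Scope R_scope.

Definition is_open_interval (I : R -> Prop) : Prop :=
  (exists x, I x) /\
  (forall x y z, I x -> I z -> x <= y <= z -> I y) /\
  (forall x, I x -> exists e, 0 < e /\ forall y, Rabs (y - x) < e -> I y).

(* [D] is a sequence of successive derivatives of [f] on [I]:
   D 0 = f and (D n)' = D (n+1) at every point of I.
   Existence of such a D is smoothness (C^infinity) of f on I. *)
Definition derivatives_on (I : R -> Prop) (f : R -> R) (D : nat -> R -> R) : Prop :=
  (forall x, D 0%nat x = f x) /\
  (forall (n : nat) x, I x -> derivable_pt_lim (D n) x (D (S n) x)).

Definition smooth_on (I : R -> Prop) (f : R -> R) : Prop :=
  exists D, derivatives_on I f D.

(* Geometry of the graph z = u(x,y) with u(x,y) = f(x) + g(y), at a point where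
   f' = f1, f'' = f2, g' = g1, g'' = g2 (so u_x = f1, u_y = g1, u_xx = f2,
   u_yy = g2, u_xy = 0).  Upward unit normal N = (-u_x, -u_y, 1)/W,
   W = sqrt(1 + u_x^2 + u_y^2); mean curvature normalized by Delta_S X = 2 H N:
   H = ((1+u_y^2) u_xx - 2 u_x u_y u_xy + (1+u_x^2) u_yy) / (2 W^3). *)
Definition tW (f1 g1 : R) : R := sqrt (1 + f1 ^ 2 + g1 ^ 2).

Definition tH (f1 f2 g1 g2 : R) : R :=
  ((1 + g1 ^ 2) * f2 + (1 + f1 ^ 2) * g2) / (2 * tW f1 g1 ^ 3).

Definition tN (f1 g1 : R) : R * R * R :=
  (- f1 / tW f1 g1, - g1 / tW f1 g1, 1 / tW f1 g1).

Definition tHphi (al be ga f1 f2 g1 g2 : R) : R :=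
  let '(n1, n2, n3) := tN f1 g1 in
  tH f1 f2 g1 g2 - / 2 * (al * n1 + be * n2 + ga * n3).

Definition phi_minimal_translation (al be ga : R) (I J : R -> Prop)
  (Df Dg : nat -> R -> R) : Prop :=
  forall x y, I x -> J y ->
    tHphi al be ga (Df 1%nat x) (Df 2%nat x) (Dg 1%nat y) (Dg 2%nat y) = 0.

Definition affine_on (I : R -> Prop) (f : R -> R) : Prop :=
  exists a b, forall x, I x -> f x = a * x + b.

(* Writing p = f', q = g', A = f'', B = g'', the phi-minimality equation
   rearranges to
     al p^3 + be q^3 + ga = (1 + q^2) (ga - al p - A) + (1 + p^2) (ga - be q - B),
   whose right-hand side is of the form (1 + q^2) a(x) + (1 + p^2) b(y).
   If neither f'' nor g'' vanishes identically, then f' and g' take at least four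
   distinct values each, and comparing coefficients of cubic polynomials in p and q
   separates the variables and forces al = be = ga = 0.  So f'' = 0 or g'' = 0
   on the whole interval, and a function with vanishing second derivative on an
   interval is affine. *)
From Stdlib Require Import Reals Lra Psatz Classical.
From Coquelicot Require Import Coquelicot.
Open Scope R_scope.

Lemma const_on_of_derive_0 (I : R -> Prop) (h : R -> R) :
  (forall x y z, I x -> I z -> x <= y <= z -> I y) ->
  (forall x, I x -> derivable_pt_lim h x 0) ->
  forall x y, I x -> I y -> h x = h y.
Proof.
  intros Hconv Hd.
  assert (Hlt : forall a b, I a -> I b -> a < b -> h a = h b).
  { intros a b Ha Hb Hab; apply eq_is_derive; [|exact Hab].
    intros t Ht; apply is_derive_Reals, Hd, (Hconv a t b); auto. }
  intros x y Hx Hy; destruct (Rtotal_order x y) as [H|[->|H]]; auto.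
  symmetry; auto.
Qed.

Lemma affine_on_of_second_derivative_0 (I : R -> Prop) (f : R -> R)
  (D : nat -> R -> R) :
  is_open_interval I -> derivatives_on I f D ->
  (forall x, I x -> D 2%nat x = 0) -> affine_on I f.
Proof.
  intros [[x0 Ix0] [Hconv _]] [HD0 HD] HD2.
  set (c := D 1%nat x0).
  assert (Hc : forall x, I x -> D 1%nat x = c).
  { intros x Ix; apply (const_on_of_derive_0 I); auto.
    intros t It; rewrite <- (HD2 t It); apply HD; auto. }
  assert (Hline : forall x, I x -> D 0%nat x - c * x = D 0%nat x0 - c * x0).
  { intros x Ix; apply (const_on_of_derive_0 I (fun x => D 0%nat x - c * x)); auto.
    intros t It; replace 0 with (D 1%nat t - c * 1) by (rewrite (Hc t It); ring).
    apply derivable_pt_lim_minus; [apply HD; auto|].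
    apply derivable_pt_lim_scal, derivable_pt_lim_id. }
  exists c, (D 0%nat x0 - c * x0); intros x Ix.
  rewrite <- HD0, <- (Hline x Ix); ring.
Qed.

Definition four_values_on (I : R -> Prop) (p : R -> R) : Prop :=
  exists x1 x2 x3 x4, I x1 /\ I x2 /\ I x3 /\ I x4 /\
    p x1 <> p x2 /\ p x1 <> p x3 /\ p x1 <> p x4 /\
    p x2 <> p x3 /\ p x2 <> p x4 /\ p x3 <> p x4.

Lemma four_values_on_opp (I : R -> Prop) (p : R -> R) :
  four_values_on I (fun x => - p x) -> four_values_on I p.
Proof.
  intros (x1 & x2 & x3 & x4 & H1 & H2 & H3 & H4 & d12 & d13 & d14 & d23 & d24 & d34).
  exists x1, x2, x3, x4; repeat split; auto; intro E;
    [apply d12 | apply d13 | apply d14 | apply d23 | apply d24 | apply d34]; lra.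
Qed.

Lemma derivable_pt_lim_pos_increment (P : R -> R) (x0 l : R) :
  derivable_pt_lim P x0 l -> 0 < l ->
  exists d, 0 < d /\ forall k, 0 < k < d ->
    l / 2 * k < P (x0 + k) - P x0 < 3 * l / 2 * k.
Proof.
  intros Hd Hl.
  destruct (Hd (l / 2)) as [[d Hdpos] Hdd]; [lra|].
  exists d; split; [exact Hdpos|]; intros k Hk.
  assert (Hq : Rabs ((P (x0 + k) - P x0) / k - l) < l / 2).
  { apply Hdd; [lra|]; rewrite Rabs_right; simpl; lra. }
  apply Rabs_def2 in Hq as [Hq1 Hq2].
  replace (P (x0 + k) - P x0) with ((P (x0 + k) - P x0) / k * k) by (field; lra).
  split; nra.
Qed.

(* The increments at h/16, h/4 and h lie in pairwise disjoint intervals. *)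
Lemma four_values_on_of_derivative_pos (I : R -> Prop) (P : R -> R) (x0 l : R) :
  is_open_interval I -> I x0 -> derivable_pt_lim P x0 l -> 0 < l ->
  four_values_on I P.
Proof.
  intros [_ [_ Hopen]] Ix0 Hd Hl.
  destruct (Hopen x0 Ix0) as [e [He HI]].
  destruct (derivable_pt_lim_pos_increment P x0 l Hd Hl) as [d [Hdpos Hinc]].
  set (h := Rmin d e / 2).
  assert (Hh : 0 < h /\ h < d /\ h < e).
  { unfold h; pose proof (Rmin_l d e); pose proof (Rmin_r d e).
    apply Rmin_case_strong; intros; lra. }
  assert (Hin : forall k, 0 < k <= h -> I (x0 + k)).
  { intros k Hk; apply HI; replace (x0 + k - x0) with k by ring.
    rewrite Rabs_right; lra. }
  destruct (Hinc h) as [A1 A2]; [lra|].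
  destruct (Hinc (h / 4)) as [B1 B2]; [lra|].
  destruct (Hinc (h / 16)) as [C1 C2]; [lra|].
  exists x0, (x0 + h), (x0 + h / 4), (x0 + h / 16).
  repeat split; try apply Hin; auto; try lra; nra.
Qed.

Lemma four_values_on_of_derivative_neq0 (I : R -> Prop) (P : R -> R) (x0 l : R) :
  is_open_interval I -> I x0 -> derivable_pt_lim P x0 l -> l <> 0 ->
  four_values_on I P.
Proof.
  intros HI Ix0 Hd Hl; destruct (Rdichotomy _ _ Hl) as [Hneg|Hpos].
  - apply four_values_on_opp, (four_values_on_of_derivative_pos I _ x0 (- l));
      auto; [apply derivable_pt_lim_opp, Hd | lra].
  - exact (four_values_on_of_derivative_pos I P x0 l HI Ix0 Hd Hpos).
Qed.

Lemma cubic_coefs_eq0_of_four_roots c3 c2 c1 c0 x1 x2 x3 x4 :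
  x1 <> x2 -> x1 <> x3 -> x1 <> x4 -> x2 <> x3 -> x2 <> x4 -> x3 <> x4 ->
  c3 * x1 ^ 3 + c2 * x1 ^ 2 + c1 * x1 + c0 = 0 ->
  c3 * x2 ^ 3 + c2 * x2 ^ 2 + c1 * x2 + c0 = 0 ->
  c3 * x3 ^ 3 + c2 * x3 ^ 2 + c1 * x3 + c0 = 0 ->
  c3 * x4 ^ 3 + c2 * x4 ^ 2 + c1 * x4 + c0 = 0 ->
  c3 = 0 /\ c2 = 0 /\ c1 = 0 /\ c0 = 0.
Proof.
  intros d12 d13 d14 d23 d24 d34 E1 E2 E3 E4.
  apply Rminus_eq_contra in d12, d13, d14, d23, d24, d34.
  set (P := fun x => c3 * x ^ 3 + c2 * x ^ 2 + c1 * x + c0) in *.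
  (* Lagrange interpolation: leading coefficients as sums of divided differences. *)
  assert (H3 : c3 = P x1 / ((x1 - x2) * (x1 - x3) * (x1 - x4))
    + P x2 / ((x2 - x1) * (x2 - x3) * (x2 - x4))
    + P x3 / ((x3 - x1) * (x3 - x2) * (x3 - x4))
    + P x4 / ((x4 - x1) * (x4 - x2) * (x4 - x3))).
  { unfold P; field; repeat split; auto; intro; lra. }
  unfold P in H3; rewrite E1, E2, E3, E4 in H3.
  assert (Hc3 : c3 = 0) by (rewrite H3; field; repeat split; auto; intro; lra).
  subst c3.
  set (Q := fun x => c2 * x ^ 2 + c1 * x + c0).
  assert (H2 : c2 = Q x1 / ((x1 - x2) * (x1 - x3)) + Q x2 / ((x2 - x1) * (x2 - x3))
    + Q x3 / ((x3 - x1) * (x3 - x2))).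
  { unfold Q; field; repeat split; auto; intro; lra. }
  assert (Q1 : Q x1 = 0) by (unfold Q; lra).
  assert (Q2 : Q x2 = 0) by (unfold Q; lra).
  assert (Q3 : Q x3 = 0) by (unfold Q; lra).
  rewrite Q1, Q2, Q3 in H2.
  assert (Hc2 : c2 = 0) by (rewrite H2; field; repeat split; auto; intro; lra).
  subst c2.
  assert (Hc1 : c1 = 0) by (apply (Rmult_eq_reg_r (x1 - x2)); [lra | auto]).
  subst c1; repeat split; lra.
Qed.

Lemma cubic_coefs_eq0_on_four_values (I : R -> Prop) (p : R -> R) c3 c2 c1 c0 :
  four_values_on I p ->
  (forall x, I x -> c3 * p x ^ 3 + c2 * p x ^ 2 + c1 * p x + c0 = 0) ->
  c3 = 0 /\ c2 = 0 /\ c1 = 0 /\ c0 = 0.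
Proof.
  intros (x1 & x2 & x3 & x4 & H1 & H2 & H3 & H4 & d12 & d13 & d14 & d23 & d24 & d34) E.
  exact (cubic_coefs_eq0_of_four_roots _ _ _ _ _ _ _ _ d12 d13 d14 d23 d24 d34
           (E _ H1) (E _ H2) (E _ H3) (E _ H4)).
Qed.

Lemma four_values_on_sqr_neq (J : R -> Prop) (q : R -> R) :
  four_values_on J q -> exists ya yb, J ya /\ J yb /\ q ya ^ 2 - q yb ^ 2 <> 0.
Proof.
  intros Hq; apply NNPP; intro Hconst.
  destruct Hq as (y1 & Hq); pose proof Hq as (_ & _ & _ & J1 & _).
  (* otherwise q^2 is constant, a nonzero polynomial relation of degree two *)
  destruct (cubic_coefs_eq0_on_four_values J q 0 1 0 (- q y1 ^ 2))
    as [_ [H _]]; [exists y1; exact Hq | | lra].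
  intros y Jy; apply NNPP; intro Hne; apply Hconst.
  exists y, y1; repeat split; auto; lra.
Qed.

Lemma separated_relation_coefs_eq0 (I J : R -> Prop) (p a q b : R -> R) al be ga :
  four_values_on I p -> four_values_on J q ->
  (forall x y, I x -> J y ->
     al * p x ^ 3 + be * q y ^ 3 + ga = (1 + q y ^ 2) * a x + (1 + p x ^ 2) * b y) ->
  al = 0 /\ be = 0 /\ ga = 0.
Proof.
  intros Hp Hq Rel.
  destruct (four_values_on_sqr_neq J q Hq) as (ya & yb & Ja & Jb & Hab).
  set (lam := - (b ya - b yb) / (q ya ^ 2 - q yb ^ 2)).
  set (mu := be * (q ya ^ 3 - q yb ^ 3) / (q ya ^ 2 - q yb ^ 2)).
  assert (Ha : forall x, I x -> a x = lam * (1 + p x ^ 2) + mu).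
  { intros x Ix; pose proof (Rel x ya Ix Ja); pose proof (Rel x yb Ix Jb).
    apply (Rmult_eq_reg_l (q ya ^ 2 - q yb ^ 2)); [|exact Hab].
    unfold lam, mu; field_simplify; [lra | exact Hab]. }
  assert (Hy : forall y, J y -> al = 0 /\ be * q y ^ 3 + ga - (1 + q y ^ 2) * mu = 0).
  { intros y Jy.
    destruct (cubic_coefs_eq0_on_four_values I p al (- ((1 + q y ^ 2) * lam + b y)) 0
                (be * q y ^ 3 + ga - (1 + q y ^ 2) * (lam + mu) - b y)) as (H3 & H2 & _ & H0);
      [exact Hp | | split; [exact H3 | lra]].
    intros x Ix; pose proof (Rel x y Ix Jy) as R; rewrite (Ha x Ix) in R; lra. }
  destruct (cubic_coefs_eq0_on_four_values J q be (- mu) 0 (ga - mu)) as (H3 & H2 & _ & H0);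
    [exact Hq | | repeat split; [apply (Hy ya Ja) | lra | lra]].
  intros y Jy; destruct (Hy y Jy) as [_ H]; lra.
Qed.

(* Clearing the denominator 2 W^3 of tHphi gives the graph equation
   (1 + q^2) A + (1 + p^2) B = W^2 (ga - al p - be q) with W^2 = 1 + p^2 + q^2,
   which is then rearranged. *)
Lemma tHphi_eq0_separated al be ga p A q B :
  tHphi al be ga p A q B = 0 ->
  al * p ^ 3 + be * q ^ 3 + ga
  = (1 + q ^ 2) * (ga - al * p - A) + (1 + p ^ 2) * (ga - be * q - B).
Proof.
  unfold tHphi, tN, tH; set (W := tW p q).
  assert (HW2 : W ^ 2 = 1 + p ^ 2 + q ^ 2).
  { unfold W, tW; rewrite <- Rsqr_pow2; apply Rsqr_sqrt; nra. }
  assert (HW : 0 < W) by (unfold W, tW; apply sqrt_lt_R0; nra).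
  intros E0.
  assert (E1 : (1 + q ^ 2) * A + (1 + p ^ 2) * B - W ^ 2 * (- al * p - be * q + ga)
    = (((1 + q ^ 2) * A + (1 + p ^ 2) * B) / (2 * W ^ 3)
       - / 2 * (al * (- p / W) + be * (- q / W) + ga * (1 / W))) * (2 * W ^ 3)).
  { field; lra. }
  rewrite E0, Rmult_0_l, HW2 in E1; lra.
Qed.

Theorem theorem4 (Ix Jy : R -> Prop) (f g : R -> R) (Df Dg : nat -> R -> R)
  (al be ga : R) :
  is_open_interval Ix -> is_open_interval Jy ->
  derivatives_on Ix f Df -> derivatives_on Jy g Dg ->
  ~ (al = 0 /\ be = 0 /\ ga = 0) ->
  phi_minimal_translation al be ga Ix Jy Df Dg ->
  (affine_on Ix f /\ (forall x, Ix x -> Df 2%nat x = 0)) \/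
  (affine_on Jy g /\ (forall y, Jy y -> Dg 2%nat y = 0)).
Proof.
  intros HI HJ HDf HDg Hne Hmin.
  destruct (classic (forall x, Ix x -> Df 2%nat x = 0)) as [Fz|Fnz].
  { left; split; [eapply affine_on_of_second_derivative_0; eauto | exact Fz]. }
  destruct (classic (forall y, Jy y -> Dg 2%nat y = 0)) as [Gz|Gnz].
  { right; split; [eapply affine_on_of_second_derivative_0; eauto | exact Gz]. }
  exfalso; apply Hne.
  apply not_all_ex_not in Fnz as [x0 Fx]; apply imply_to_and in Fx as [Ix0 Fx].
  apply not_all_ex_not in Gnz as [y0 Gy]; apply imply_to_and in Gy as [Jy0 Gy].
  apply (separated_relation_coefs_eq0 Ix Jy (Df 1%nat)
           (fun x => ga - al * Df 1%nat x - Df 2%nat x)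
           (Dg 1%nat) (fun y => ga - be * Dg 1%nat y - Dg 2%nat y)).
  - exact (four_values_on_of_derivative_neq0 Ix _ x0 _ HI Ix0 (proj2 HDf 1%nat x0 Ix0) Fx).
  - exact (four_values_on_of_derivative_neq0 Jy _ y0 _ HJ Jy0 (proj2 HDg 1%nat y0 Jy0) Gy).
  - intros x y Hx Hy; apply tHphi_eq0_separated, Hmin; auto.
Qed.
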